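(* Let $p$ be a prime, $a>0$ an integer, and $n=p^a+1$. Then for every prime $r$ dividing $n$, $n$ satisfies Condition 1 with $p$ and $r$; i.e., for every integer $k$ with $1\le k\le n-1$, $\binom{n}{k}$ is divisible by $p$ or by $r$.
   Context: A positive integer $n$ satisfies Condition 1 with primes $p$ and $q$ if for all integers $k$ with $1\le k\le n-1$ the binomial coefficient $\binom{n}{k}$ is divisible by at least one of $p$ or $q$. *)

From mathcomp Require Import all_boot.

Definition condition1 (n p q : nat) : Prop :=
  forall k : nat, 1 <= k -> k <= n - 1 -> (p %| 'C(n, k)) || (q %| 'C(n, k)).

From mathcomp Require Import all_boot.

(* Pascal's rule writes 'C(p^a + 1, k) as 'C(p^a, k) + 'C(p^a, k - 1), and p
   divides every inner binomial coefficient of p^a; the two outer coefficients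
   left over, for k = 1 and k = p^a, both equal p^a + 1, which r divides. *)

(* k 'C(p^a, k) = p^a 'C(p^a - 1, k - 1), so if p does not divide 'C(p^a, k)
   then p^a divides k, which is impossible for 0 < k < p^a. *)
Lemma prime_dvd_bin_pow p a k : prime p -> 0 < k < p ^ a -> p %| 'C(p ^ a, k).
Proof.
move=> p_pr /andP[k_gt0 k_lt]; apply: contraT => p_ndvd.
have cop : coprime (p ^ a) 'C(p ^ a, k) by rewrite coprimeXl ?prime_coprime.
have : p ^ a %| k * 'C(p ^ a, k).
  by case: k k_gt0 {k_lt p_ndvd cop} => // k _; rewrite -mul_bin_diag dvdn_mulr.
rewrite Gauss_dvdl // => /(dvdn_leq k_gt0).
by rewrite leqNgt k_lt.
Qed.

Lemma prime_dvd_binS_pow p a k :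
  prime p -> 1 < k < p ^ a -> p %| 'C((p ^ a).+1, k).
Proof.
move=> p_pr; case: k => // k; rewrite ltnS => /andP[k_gt0 k_lt].
by rewrite binS dvdn_add // prime_dvd_bin_pow // k_gt0 ltnW.
Qed.

Theorem mainTheorem3 (p a r : nat) :
  prime p -> 0 < a -> prime r -> r %| p ^ a + 1 ->
  condition1 (p ^ a + 1) p r.
Proof.
move=> p_pr _ _; rewrite /condition1 addn1 => r_dvd k k_gt0.
rewrite subn1 succnK => k_le.
have [k_gt1 | k_le1] := ltnP 1 k.
  have [k_lt | k_ge] := ltnP k (p ^ a); first by rewrite prime_dvd_binS_pow ?k_gt1.
  have -> : k = p ^ a by apply/eqP; rewrite eqn_leq k_le k_ge.
  by rewrite binSn r_dvd orbT.
have -> : k = 1 by apply/eqP; rewrite eqn_leq k_le1 k_gt0.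
by rewrite bin1 r_dvd orbT.
Qed.
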